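(* Let $R$ be a tournament on $[n]$. Then there is a positive integer $M$ such that for every integer $N\ge M$ there exists a regular $n$ partition $\mathcal A=\{A_1,\dots,A_n\}$ of $[Nn]$ with $R[\mathcal A]=R$; that is, for $i,j\in[n]$, $A_i\to A_j$ if and only if $(i,j)\in R$.
   Context: A tournament on $[n]$ is $R\subset[n]\times[n]$ with no diagonal pairs and exactly one of $(i,j),(j,i)$ for each distinct $i,j$. A regular $n$ partition of $[Nn]=\{1,\dots,Nn\}$ is a partition $\{A_1,\dots,A_n\}$ into $n$ disjoint sets each of cardinality $N$. For such a partition, $R[\mathcal A]=\{(i,j)\in[n]\times[n]: |\{(a,b)\in A_i\times A_j:a>b\}|>N^2/2\}$, and $A_i\to A_j$ means $(i,j)\in R[\mathcal A]$. *)

From mathcomp Require Import all_boot.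
Set Implicit Arguments. Unset Strict Implicit. Unset Printing Implicit Defensive.

(* [n] is modelled by 'I_n = {0,...,n-1}; [Nn] by 'I_(N*n) (shift by one,
   which preserves the order used in R[A]). *)

Definition is_tournament (n : nat) (R : rel 'I_n) : Prop :=
  (forall i, ~~ R i i) /\
  (forall i j, i != j -> (R i j && ~~ R j i) || (R j i && ~~ R i j)).

Definition regular_partition (N n : nat) (A : 'I_n -> {set 'I_(N * n)}) : Prop :=
  (forall i, #|A i| = N) /\
  (forall i j, i != j -> [disjoint A i & A j]) /\
  (forall x : 'I_(N * n), exists i, x \in A i).

Definition above_count (N n : nat) (A : 'I_n -> {set 'I_(N * n)}) (i j : 'I_n) : nat :=
  #|[set p : 'I_(N * n) * 'I_(N * n) | (p.1 \in A i) && (p.2 \in A j) && (p.2 < p.1)]|.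

Definition induced_rel (N n : nat) (A : 'I_n -> {set 'I_(N * n)}) : rel 'I_n :=
  fun i j => N ^ 2 < 2 * above_count A i j.

From mathcomp Require Import all_boot zify.
Set Implicit Arguments. Unset Strict Implicit. Unset Printing Implicit Defensive.

(* Read the partition as the word whose k-th letter is the block containing k:
   then above_count A i j counts the pairs "j, then later i" in that word.  If
   the word is a concatenation of N orderings of [n], this count is C(N,2) plus
   the number of orderings putting i after j, so R[A] is the strict majority
   relation of these N orderings.  Every tournament is such a majority relation
   (McGarvey): an edge (a,b) contributes the two orderings [b; a; rest] and
   [rev rest; b; a], which agree only in putting a after b; pairs of mutually
   reversed orderings pad the profile, and when N is odd a single extra ordering
   is added, whose vote is outweighed by the margin 2 of every edge. *)

Section Above.
Variable T : eqType.
Implicit Types (i j x : T) (u v w : seq T).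

Fixpoint above i j w : nat :=
  if w is x :: w' then (x == j) * count_mem i w' + above i j w' else 0.

Lemma above_cat i j u v :
  above i j (u ++ v) = above i j u + above i j v + count_mem i v * count_mem j u.
Proof.
elim: u => [|x u IH] /=; first by rewrite muln0 addn0.
by rewrite IH count_cat; case: (x == j) => /=; lia.
Qed.

Lemma above_rev i j w : above i j (rev w) = above j i w.
Proof.
elim: w => [|x w IH] //=.
by rewrite rev_cons -cats1 above_cat IH /= count_rev; case: (x == i) => /=; lia.
Qed.

Lemma above_cat_rev i j u v :
  above i j (u ++ rev v) + above i j v = above i j (u ++ v) + above i j (rev v).
Proof. by rewrite !above_cat count_rev; lia. Qed.

Lemma above_pair i j w : i != j ->
  above i j w + above j i w = count_mem i w * count_mem j w.
Proof.
move=> neq_ij; elim: w => [|x w IH] //=.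
have [-> | neq_xi] := eqVneq x i; first by rewrite (negbTE neq_ij) /=; lia.
by case: (x == j) => /=; lia.
Qed.

Lemma above_diag i w : 2 * above i i w + count_mem i w = count_mem i w ^ 2.
Proof. by elim: w => [|x w IH] //=; case: (x == i) => /=; lia. Qed.

Lemma above_nth x0 i j w :
  above i j w = \sum_(k < size w) \sum_(l < size w)
                  ((nth x0 w k == i) && (nth x0 w l == j) && (l < k)).
Proof.
elim: w => [|x w IH]; first by rewrite big_ord0.
rewrite /= big_ord_recl /= big1 ?add0n => [|l _]; last by rewrite andbF.
under eq_bigr => k _ do rewrite big_ord_recl /=.
rewrite big_split /= IH; congr (_ + _).
rewrite -sum1_count (big_nth x0) big_mkcond big_mkord big_distrr /=.
by apply: eq_bigr => k _; rewrite andbT; case: (x == j); case: (_ == i).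
Qed.

End Above.

Section Positions.
Variables (T : eqType) (L : nat) (t : L.-tuple T).

Definition positions x := [set k : 'I_L | tnth t k == x].

Lemma card_positions x : #|positions x| = count_mem x t.
Proof.
rewrite -sum1_card -sum1_count (big_nth x) big_mkcond [RHS]big_mkcond size_tuple big_mkord.
by apply: eq_bigr => k _; rewrite inE (tnth_nth x).
Qed.

Lemma card_positions_above i j :
  #|[set p : 'I_L * 'I_L |
     (p.1 \in positions i) && (p.2 \in positions j) && (p.2 < p.1)]| = above i j t.
Proof.
rewrite (above_nth i) -sum1_card big_mkcond /= size_tuple pair_big /=.
by apply: eq_bigr => -[k l] _; rewrite !inE -!(tnth_nth i); case: ifP.
Qed.

End Positions.

Lemma regular_partition_positions N n (t : (N * n).-tuple 'I_n) :
  (forall x, count_mem x t = N) -> regular_partition (positions t).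
Proof.
move=> count_t; split; first by move=> x; rewrite card_positions.
split; last by move=> k; exists (tnth t k); rewrite inE.
move=> x y neq_xy; apply/pred0P => k /=; rewrite !inE.
by apply: contraNF neq_xy => /andP[/eqP <- /eqP <-].
Qed.

Section Rankings.
Variable T : finType.
Implicit Types (a b i j : T) (s : seq T) (P : seq (seq T)).

Definition ranking s := perm_eq s (enum T).

Definition votes i j P := \sum_(s <- P) above i j s.

Definition majority P i j := size P < 2 * votes i j P.

Lemma count_ranking s x : ranking s -> count_mem x s = 1.
Proof. by move/permP->; rewrite enumT enumP. Qed.

Lemma above_ranking_diag s i : ranking s -> above i i s = 0.
Proof. by move=> /(count_ranking i) s_i; have := above_diag i s; rewrite s_i; lia. Qed.

Lemma above_ranking_pair s i j : ranking s -> i != j -> above i j s + above j i s = 1.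
Proof. by move=> rs /above_pair->; rewrite !count_ranking. Qed.

Lemma count_flatten_rankings P x : all ranking P -> count_mem x (flatten P) = size P.
Proof.
elim: P => //= s P IH /andP[/(count_ranking x) s_x /IH].
by rewrite count_cat s_x => ->.
Qed.

Lemma size_flatten_rankings P : all ranking P -> size (flatten P) = size P * #|T|.
Proof.
elim: P => //= s P IH /andP[rs /IH]; rewrite size_cat => ->.
by rewrite (perm_size rs) -cardT mulSn.
Qed.

Lemma above_flatten_rankings P i j :
  all ranking P -> above i j (flatten P) = 'C(size P, 2) + votes i j P.
Proof.
rewrite /votes; elim: P => [|s P IH] /=; first by rewrite big_nil.
move=> /andP[rs rP]; rewrite above_cat IH // big_cons count_flatten_rankings //.
by rewrite count_ranking // binS bin1; lia.
Qed.

Lemma majority_flatten P i j :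
  all ranking P -> majority P i j = (size P ^ 2 < 2 * above i j (flatten P)).
Proof.
move=> rP; rewrite above_flatten_rankings // /majority mulnDr.
have -> : 2 * 'C(size P, 2) = size P * (size P).-1.
  by rewrite bin2 mul2n even_halfK // oddM; case: (size P) => //= k; rewrite andNb.
by case: (size P) => // k; lia.
Qed.

Lemma votes_cat i j P Q : votes i j (P ++ Q) = votes i j P + votes i j Q.
Proof. exact: big_cat. Qed.

Lemma votes_flatten i j (Q : seq (seq (seq T))) :
  votes i j (flatten Q) = \sum_(P <- Q) votes i j P.
Proof. exact: big_flatten. Qed.

Lemma majority_diag P i : all ranking P -> majority P i i = false.
Proof.
move=> /allP rP; rewrite /majority /votes big1_seq ?ltn0 // => s /andP[_ /rP].
exact: above_ranking_diag.
Qed.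

Definition others a b := [seq x <- enum T | x \notin [:: a; b]].

Definition gadget a b := [:: [:: b, a & others a b]; rev (others a b) ++ [:: b; a]].

Lemma mem_others a b x : (x \in others a b) = (x \notin [:: a; b]).
Proof. by rewrite mem_filter mem_enum andbT. Qed.

Lemma gadget_rankings a b : a != b -> all ranking (gadget a b).
Proof.
move=> neq_ab.
have r1 : ranking [:: b, a & others a b].
  apply: uniq_perm => [||x]; rewrite ?enum_uniq //.
    rewrite !cons_uniq inE !mem_others !inE !eqxx orbT /= orbF eq_sym neq_ab.
    by rewrite filter_uniq ?enum_uniq.
  by rewrite mem_enum !inE mem_others !inE; case: (x == b); case: (x == a).
rewrite /= r1 andbT /ranking; apply: perm_trans r1.
by rewrite perm_catC /= !perm_cons perm_rev.
Qed.

Lemma votes_gadget a b i j : a != b -> i != j ->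
  votes i j (gadget a b) + ((a, b) == (j, i)) = 1 + ((a, b) == (i, j)).
Proof.
move=> /gadget_rankings /andP[r1 _] neq_ij.
have above_ba k l : above k l [:: b; a] = (a == k) * (b == l).
  by rewrite /= !addn0 muln0 addn0 mulnC.
(* The second ordering is the reversal of the first with its last two letters swapped. *)
have swap_ab := above_cat_rev i j (rev (others a b)) [:: b; a].
rewrite -rev_cat !above_rev !above_ba cat_cons cat1s in swap_ab.
rewrite /votes !big_cons big_nil addn0 -(above_ranking_pair r1 neq_ij).
rewrite !xpair_eqE -!mulnb.
(* Identify the syntactically different copies of each word, so that [lia] sees common atoms. *)
set s1 := [:: b, a & others a b] in swap_ab *.
set s2 := rev (others a b) ++ _ in swap_ab *.
lia.
Qed.

Lemma size_flatten_gadgets (es : seq (T * T)) :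
  size (flatten [seq gadget p.1 p.2 | p <- es]) = 2 * size es.
Proof. by elim: es => //= p es ->; rewrite mulnS. Qed.

Lemma votes_gadgets (es : seq (T * T)) i j :
  all (fun p => p.1 != p.2) es -> i != j ->
  votes i j (flatten [seq gadget p.1 p.2 | p <- es]) + count_mem (j, i) es
  = size es + count_mem (i, j) es.
Proof.
move=> /allP neq_es neq_ij.
rewrite votes_flatten big_map -!sumn_count !sumnE !big_map -sum1_size -!big_split.
apply: eq_big_seq => -[a b] /neq_es neq_ab /=.
exact: votes_gadget neq_ab neq_ij.
Qed.

Lemma votes_reversed_pairs s k i j : ranking s -> i != j ->
  votes i j (nseq k s ++ nseq k (rev s)) = k.
Proof.
move=> rs neq_ij; rewrite votes_cat /votes !big_nseq !iter_addn_0 above_rev.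
by rewrite -mulnDl above_ranking_pair ?mul1n.
Qed.

Lemma tournament_majority_profile (R : rel T) :
  irreflexive R -> (forall i j, i != j -> R i j = ~~ R j i) ->
  forall N, 2 * #|[pred p : T * T | R p.1 p.2]| < N ->
  exists P, [/\ size P = N, all ranking P & forall i j, majority P i j = R i j].
Proof.
move=> irrR asymR N; rewrite cardE; set es := enum _ => ltN.
have neq_es : all (fun p => p.1 != p.2) es.
  by apply/allP => -[a b]; rewrite mem_enum inE /=; apply: contraTneq => ->; rewrite irrR.
have R_es i j : count_mem (i, j) es = R i j by rewrite count_uniq_mem ?enum_uniq // mem_enum.
pose k := (N - 2 * size es)./2; pose e := odd (N - 2 * size es).
have r0 : ranking (enum T) by exact: perm_refl.
have r0' : ranking (rev (enum T)) by rewrite /ranking perm_rev.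
set P := flatten [seq gadget p.1 p.2 | p <- es] ++
         (nseq k (enum T) ++ nseq k (rev (enum T))) ++ nseq e (enum T).
have rP : all ranking P.
  rewrite !all_cat !all_nseq r0 r0' !orbT !andbT.
  apply/allP => s /flattenP[_ /mapP[p p_es ->]].
  exact/allP/gadget_rankings/(allP neq_es).
have sizeN : 2 * size es + (k.*2 + e) = N.
  by rewrite [k.*2 + e]addnC odd_double_half subnKC // ltnW.
have sizeP : size P = N by rewrite !size_cat size_flatten_gadgets !size_nseq addnn.
exists P; split=> // i j.
have [<- | neq_ij] := eqVneq i j; first by rewrite majority_diag ?irrR.
have := votes_gadgets neq_es neq_ij; rewrite !R_es.
have := above_ranking_pair r0 neq_ij.
rewrite /majority sizeP 2!votes_cat votes_reversed_pairs // /votes big_nseq iter_addn_0.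
move: (asymR i j neq_ij) sizeN; case: (R i j); case: (R j i) => //= _ <- *.
  by apply/idP; lia.
by apply/negbTE; rewrite -leqNgt; lia.
Qed.

End Rankings.

Theorem theorem6p1 (n : nat) (R : rel 'I_n) :
  is_tournament R ->
  exists M : nat, 0 < M /\
    forall N : nat, M <= N ->
      exists A : 'I_n -> {set 'I_(N * n)},
        regular_partition A /\ (forall i j : 'I_n, induced_rel A i j = R i j).
Proof.
move=> [irrR tourR].
have asymR i j : i != j -> R i j = ~~ R j i.
  by move=> /tourR; case: (R i j); case: (R j i).
exists (2 * #|[pred p : 'I_n * 'I_n | R p.1 p.2]|).+1; split=> // N ltN.
have [P [sizeP rP majP]] := tournament_majority_profile (fun i => negbTE (irrR i)) asymR ltN.
have sizeW : size (flatten P) == N * n by rewrite size_flatten_rankings // sizeP card_ord.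
exists (positions (Tuple sizeW)); split.
  by apply: regular_partition_positions => x; rewrite count_flatten_rankings.
move=> i j; rewrite -majP (majority_flatten _ _ rP) sizeP.
by rewrite /induced_rel /above_count card_positions_above.
Qed.
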